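(* Let $\phi$ be a strictly convex norm on $\mathbf{R}^n$ of class $\mathcal{C}^2$ on $\mathbf{R}^n\setminus\{0\}$ and $K\subseteq\mathbf{R}^n$ closed. Then $r^\phi_K:N^\phi(K)\to(0,\infty]$ is upper semicontinuous. Moreover, $$N^\phi(K)=\{(\xi^\phi_K(x),\nu^\phi_K(x)):x\in\mathbf{R}^n\setminus(K\cup\mathrm{Cut}^\phi(K))\}$$ and $r^\phi_K(\xi^\phi_K(x),\nu^\phi_K(x))=\delta^\phi_K(x)\,\rho^\phi_K(x)$ for all $x\in\mathbf{R}^n\setminus(K\cup\mathrm{Cut}^\phi(K))$.
   Context: A norm $\phi$ is strictly convex if $\phi(a+b)=\phi(a)+\phi(b)$ implies $\phi(b)a=\phi(a)b$. For closed $K$: $\delta^\phi_K(x)=\inf\{\phi(y-x):y\in K\}$; $\xi^\phi_K(x)=K\cap\{w:\phi(x-w)=\delta^\phi_K(x)\}$ (a singleton, identified with its element, for $x\notin K\cup\mathrm{Cut}^\phi(K)$); $\nu^\phi_K(x)=\delta^\phi_K(x)^{-1}(x-\xi^\phi_K(x))$ for $x\notin K$; $\rho^\phi_K(x)=\sup\bigl(\mathbf{R}\cap\{s:\delta^\phi_K(a+s(x-a))=s\,\delta^\phi_K(x)\}\bigr)$ for any $a\in\xi^\phi_K(x)$; $N^\phi(K)=\{(a,\eta)\in\mathbf{R}^n\times\mathbf{R}^n:a\in K,\ \phi(\eta)=1,\ \delta^\phi_K(a+s\eta)=s\text{ for some }s>0\}$; $r^\phi_K(a,\eta)=\sup\{s>0:\delta^\phi_K(a+s\eta)=s\}$;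 $\mathrm{Cut}^\phi(K)=\{a+r^\phi_K(a,\eta)\eta:(a,\eta)\in N^\phi(K),\ r^\phi_K(a,\eta)<\infty\}$. Upper semicontinuity refers to the topology of $N^\phi(K)\subseteq\mathbf{R}^{2n}$. *)

From HB Require Import structures.
From mathcomp Require Import all_boot all_order all_algebra.
From mathcomp Require Import all_classical all_reals all_analysis.
Set Implicit Arguments. Unset Strict Implicit. Unset Printing Implicit Defensive.
Import Order.TTheory GRing.Theory Num.Theory.
Import numFieldNormedType.Exports.
Local Open Scope classical_set_scope.
Local Open Scope ring_scope.

Section Defs.
Variables (R : realType) (n : nat).
Notation V := 'rV[R]_n.

Definition is_norm (phi : V -> R) : Prop :=
  [/\ forall x, 0 <= phi x,
      forall x, phi x = 0 -> x = 0,
      forall (c : R) x, phi (c *: x) = `|c| * phi x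
    & forall x y, phi (x + y) <= phi x + phi y].

Definition strictly_convex_norm (phi : V -> R) : Prop :=
  forall a b, phi (a + b) = phi a + phi b -> phi b *: a = phi a *: b.

Definition ebase (i : 'I_n) : V := delta_mx 0 i.

Definition C2_on (f : V -> R) (U : set V) : Prop :=
  open U /\
  forall x, U x ->
    [/\ {for x, continuous f},
        forall i, derivable f x (ebase i) /\
                  {for x, continuous ('D_(ebase i) f)}
      & forall i j, derivable ('D_(ebase i) f) x (ebase j) /\
                  {for x, continuous ('D_(ebase j) ('D_(ebase i) f))}].

Variables (phi : V -> R) (K : set V).

Definition dist (x : V) : R := inf [set phi (y - x) | y in K].

Definition xi (x : V) : set V := [set w | K w /\ phi (x - w) = dist x].

(* nu for a chosen nearest point a (xi x is a singleton off K u Cut) *)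
Definition nu (x a : V) : V := (dist x)^-1 *: (x - a).

Definition rho (x a : V) : \bar R :=
  ereal_sup [set s%:E | s in [set s : R | dist (a + s *: (x - a)) = s * dist x]].

Definition normal_bundle : set (V * V) :=
  [set p | K p.1 /\ phi p.2 = 1 /\
           exists s : R, 0 < s /\ dist (p.1 + s *: p.2) = s].

Definition reach (p : V * V) : \bar R :=
  ereal_sup [set s%:E | s in [set s : R | 0 < s /\ dist (p.1 + s *: p.2) = s]].

Definition cut_locus : set V :=
  [set p.1 + fine (reach p) *: p.2 | p in
     [set p | normal_bundle p /\ (reach p < +oo)%E]].

End Defs.

Definition usc_on {R : realType} {X : topologicalType} (A : set X)
  (f : X -> \bar R) : Prop :=
  forall p, A p -> forall t : R, (f p < t%:E)%E ->
    \forall q \near p, A q -> (f q < t%:E)%E.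

From HB Require Import structures.
From mathcomp Require Import all_boot all_order all_algebra.
From mathcomp Require Import all_classical all_reals all_analysis.
From mathcomp Require Import lra.
Set Implicit Arguments. Unset Strict Implicit.
Import Order.TTheory GRing.Theory Num.Theory.
Import numFieldNormedType.Exports.
Local Open Scope classical_set_scope.
Local Open Scope ring_scope.

(* Since dist is 1-Lipschitz for phi, along a ray a + s e (a in K, phi e = 1)
   the parameters s > 0 with dist (a + s e) = s form an interval starting at 0
   whose length is the reach; where the reach is exceeded, dist (a + s e) < s,
   and by continuity of dist this strict inequality persists for nearby pairs,
   which gives upper semicontinuity.  Strict convexity gives the key rigidity:
   if dist (a + t e) = t and 0 < s < t, any nearest point b of a + s e makes
   phi (a + t e - b) <= (t - s) + s an equality, which forces b = a.  Hence
   points strictly inside a normal segment have a unique nearest point and are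
   not cut points, while a point with two nearest points ends a normal segment
   and so is a cut point; this is the parametrisation of the normal bundle, and
   the reach formula is the sup defining rho rescaled by dist x. *)

Lemma lipschitz_continuous (R : numFieldType) (V W : normedModType R)
    (f : V -> W) (C : R) :
  0 <= C -> (forall x y, `|f x - f y| <= C * `|x - y|) -> continuous f.
Proof.
move=> C0 fC x; apply/cvgrPdist_lt => e e0.
have eC : 0 < e / (C + 1) by rewrite divr_gt0 // ltr_wpDl.
near=> y; apply: le_lt_trans (fC x y) _.
have xy : `|x - y| < e / (C + 1) by near: y; exact: cvgr_dist_lt.
rewrite ltr_pdivlMr ?ltr_wpDl // in xy; apply: le_lt_trans xy.
by rewrite mulrC ler_wpM2l // lerDl.
Unshelve. all: by end_near.
Qed.

Lemma bounded_norm_le (R : realFieldType) (V : normedModType R) (A : set V) (M : R) :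
  (forall v, A v -> `|v| <= M) -> bounded_set A.
Proof.
move=> AM; rewrite /= /bounded_near; near=> M' => v /AM/le_trans; apply.
by near: M'; apply: nbhs_pinfty_ge; exact: num_real.
Unshelve. all: by end_near.
Qed.

Section NormOnRow.
Variables (R : realType) (n : nat) (phi : 'rV[R]_n -> R).
Hypothesis phi_norm : is_norm phi.

Lemma phi_ge0 x : 0 <= phi x. Proof. by case: phi_norm. Qed.
Lemma phi_eq0 x : phi x = 0 -> x = 0. Proof. by case: phi_norm => _ + _ _; apply. Qed.
Lemma phiZ c x : phi (c *: x) = `|c| * phi x. Proof. by case: phi_norm => _ _ + _; apply. Qed.
Lemma phiD x y : phi (x + y) <= phi x + phi y. Proof. by case: phi_norm => _ _ _; apply. Qed.

Lemma phi0 : phi 0 = 0.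
Proof. by rewrite -(scale0r (0 : 'rV[R]_n)) phiZ normr0 mul0r. Qed.

Lemma phiN x : phi (- x) = phi x.
Proof. by rewrite -scaleN1r phiZ normrN normr1 mul1r. Qed.

Lemma phiB x y : phi (x - y) = phi (y - x).
Proof. by rewrite -phiN opprB. Qed.

Lemma phiZ_unit c x : 0 <= c -> phi x = 1 -> phi (c *: x) = c.
Proof. by move=> c0 x1; rewrite phiZ x1 mulr1 ger0_norm. Qed.

Lemma phi_ray_sub a e s t : phi e = 1 -> phi (a + s *: e - (a + t *: e)) = `|s - t|.
Proof. by move=> e1; rewrite opprD addrACA subrr add0r -scalerBl phiZ e1 mulr1. Qed.

Lemma phi_dist x y : `|phi x - phi y| <= phi (x - y).
Proof.
have := phiD (x - y) y; have := phiD (y - x) x.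
rewrite !subrK phiB ler_norml; lra.
Qed.

Lemma phi_le_mx_norm : exists2 C, 0 <= C & forall v, phi v <= C * `|v|.
Proof.
exists (\sum_(i < n) phi 'e_i); first by apply: sumr_ge0 => i _; exact: phi_ge0.
move=> v; rewrite {1}(row_sum_delta v) mulr_suml.
apply: (le_trans (y := \sum_(i < n) phi (v 0 i *: 'e_i))).
  elim/big_ind2: _ => [|a b c d ab cd|//]; first by rewrite phi0.
  by apply: le_trans (phiD _ _) _; exact: lerD.
apply: ler_sum => i _; rewrite phiZ mulrC ler_wpM2l ?phi_ge0 //.
rewrite [leRHS]/Num.Def.normr /= mx_normrE; apply/bigmax_geP; right => /=.
by exists (0, i).
Qed.

Lemma phi_continuous : continuous phi.
Proof.
have [C C0 phiC] := phi_le_mx_norm.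
by apply: (lipschitz_continuous C0) => x y; apply: le_trans (phi_dist x y) _.
Qed.

Lemma phi_coercive : exists2 c, 0 < c & forall v, c * `|v| <= phi v.
Proof.
pose S := [set v : 'rV[R]_n | `|v| = 1].
have S_normfZV v : v != 0 -> `|v|^-1 *: v \in S by move=> v0; rewrite inE /S /= normfZV.
have [[w Sw]|S0] := pselect (S !=set0); last first.
  exists 1 => // v; case: (eqVneq v 0) => [->|v0]; first by rewrite normr0 mulr0 phi_ge0.
  by exfalso; apply: S0; exists (`|v|^-1 *: v); rewrite -inE S_normfZV.
have cS : compact S.
  apply: bounded_closed_compact; first by apply: (@bounded_norm_le _ _ _ 1) => v ->.
  rewrite (_ : S = Num.norm @^-1` [set 1]) //.
  apply: preimage_closed; last exact: closed_eq.
  by move=> x _; exact: norm_continuous.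
have [c Sc cmin] := EVT_min_rV (ex_intro _ w Sw) cS (continuous_subspaceT phi_continuous).
have c_gt0 : 0 < phi c.
  rewrite lt_neqAle phi_ge0 andbT eq_sym; apply/eqP => /phi_eq0 c0.
  by move: Sc; rewrite inE /S /= c0 normr0 => /esym/eqP; rewrite oner_eq0.
exists (phi c) => // v; case: (eqVneq v 0) => [->|v0]; first by rewrite normr0 mulr0 phi_ge0.
have := cmin _ (S_normfZV v v0).
by rewrite phiZ normfV normr_id ler_pdivlMl ?normr_gt0 // mulrC.
Qed.

End NormOnRow.

Section Distance.
Variables (R : realType) (n : nat) (phi : 'rV[R]_n -> R) (K : set 'rV[R]_n).
Hypotheses (phi_norm : is_norm phi) (K0 : K !=set0).
Local Notation D := (dist phi K).

Lemma dist_le x y : K y -> D x <= phi (y - x).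
Proof.
by move=> Ky; apply: ge_inf; [exists 0 => _ [z _ <-]; exact: phi_ge0 | exists y].
Qed.

Lemma dist_ge r x : (forall y, K y -> r <= phi (y - x)) -> r <= D x.
Proof.
move=> rK; apply: lb_le_inf; last by move=> _ [y Ky <-]; exact: rK.
by case: K0 => y Ky; exists (phi (y - x)), y.
Qed.

Lemma dist_ge0 x : 0 <= D x.
Proof. by apply: dist_ge => y _; exact: phi_ge0. Qed.

Lemma dist_eq0 x : K x -> D x = 0.
Proof.
move=> Kx; apply/le_anti; rewrite dist_ge0 andbT.
by apply: le_trans (dist_le x Kx) _; rewrite subrr phi0.
Qed.

Lemma dist_lipschitz x y : D x <= D y + phi (x - y).
Proof.
rewrite -lerBlDr; apply: dist_ge => z Kz; rewrite lerBlDr.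
apply: le_trans (dist_le x Kz) _.
have -> : z - x = (z - y) + (y - x) by rewrite addrA subrK.
by apply: le_trans (phiD phi_norm _ _) _; rewrite (phiB phi_norm y).
Qed.

Lemma dist_continuous : continuous D.
Proof.
have [C C0 phiC] := phi_le_mx_norm phi_norm.
apply: (lipschitz_continuous C0) => x y; apply: le_trans (phiC _).
have := dist_lipschitz x y; have := dist_lipschitz y x.
rewrite (phiB phi_norm y) ler_norml; lra.
Qed.

Lemma dist_attained x : closed K -> exists2 a, K a & phi (x - a) = D x.
Proof.
move=> K_closed; have [c c0 phic] := phi_coercive phi_norm.
have [y0 Ky0] := K0; pose M := phi (y0 - x).
pose A := K `&` [set y | phi (y - x) <= M].
have phix_cont : continuous (fun y : 'rV[R]_n => phi (y - x)).
  have [C C0 phiC] := phi_le_mx_norm phi_norm.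
  apply: (lipschitz_continuous C0) => y z; apply: le_trans (phi_dist phi_norm _ _) _.
  by rewrite opprB addrA subrK phiC.
have cA : compact A.
  apply: bounded_closed_compact.
    apply: (@bounded_norm_le _ _ _ (M / c + `|x|)) => y [_ /= yM].
    apply: le_trans (lerD (_ : `|y - x| <= M / c) (lexx _)).
      by have := ler_normD (y - x) x; rewrite subrK.
    by rewrite ler_pdivlMr // mulrC; apply: le_trans yM.
  apply: closedI K_closed _.
  rewrite (_ : [set y | _] = (fun y => phi (y - x)) @^-1` [set r | r <= M]) //.
  by apply: preimage_closed; [move=> y _; exact: phix_cont | exact: closed_le].
have [a Aa amin] := EVT_min_rV (ex_intro _ y0 (conj Ky0 (lexx M))) cA (continuous_subspaceT phix_cont).
move: Aa; rewrite inE => -[Ka aM]; exists a => //.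
apply/le_anti; rewrite (phiB phi_norm) dist_le // andbT.
apply: dist_ge => y Ky; have [yM|/ltW] := leP (phi (y - x)) M; last exact: le_trans.
by apply: amin; rewrite inE.
Qed.

Lemma dist_ray_le a e s : K a -> phi e = 1 -> 0 <= s -> D (a + s *: e) <= s.
Proof.
move=> Ka e1 s0; apply: le_trans (dist_le _ Ka) _.
by rewrite -{1}(addr0 a) -(scale0r e) phi_ray_sub // sub0r normrN ger0_norm.
Qed.

Lemma dist_ray_segment a e s t : K a -> phi e = 1 -> D (a + s *: e) = s ->
  0 <= t <= s -> D (a + t *: e) = t.
Proof.
move=> Ka e1 Ds /andP[t0 ts]; apply/le_anti; rewrite dist_ray_le //=.
have := dist_lipschitz (a + s *: e) (a + t *: e).
by rewrite Ds phi_ray_sub // ger0_norm ?subr_ge0 //; lra.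
Qed.

Local Notation reach := (reach phi K).

Lemma reach_ge a e s : 0 < s -> D (a + s *: e) = s -> (s%:E <= reach (a, e))%E.
Proof. by move=> s0 Ds; apply: ereal_sup_ubound; exists s. Qed.

Lemma reach_le a e M : (forall s, 0 < s -> D (a + s *: e) = s -> s <= M) ->
  (reach (a, e) <= M%:E)%E.
Proof. by move=> sM; apply: ge_ereal_sup => _ [s [s0 Ds] <-]; rewrite lee_fin sM. Qed.

Lemma dist_ray_lt_reach a e s : K a -> phi e = 1 -> 0 < s ->
  (s%:E < reach (a, e))%E -> D (a + s *: e) = s.
Proof.
move=> Ka e1 s0 /ereal_sup_gt[_ [t [t0 Dt] <-]]; rewrite lte_fin => st.
by apply: dist_ray_segment Dt _; rewrite ?(ltW s0) ?(ltW st).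
Qed.

Lemma reach_le_dist_lt a e s : K a -> phi e = 1 -> 0 <= s ->
  D (a + s *: e) < s -> (reach (a, e) <= s%:E)%E.
Proof.
move=> Ka e1 s0 Ds; apply: reach_le => t t0 Dt; rewrite leNgt; apply/negP => st.
by move: Ds; rewrite (dist_ray_segment Ka e1 Dt) ?s0 ?(ltW st) // ltxx.
Qed.

Lemma dist_ray_reach a e r : K a -> phi e = 1 -> 0 < r -> reach (a, e) = r%:E ->
  D (a + r *: e) = r.
Proof.
move=> Ka e1 r0 reach_r; apply/le_anti; rewrite dist_ray_le ?(ltW r0) //=.
rewrite leNgt; apply/negP => Dr.
have Dr0 := dist_ge0 (a + r *: e).
(* any s in ((D (a + r e) + r) / 2, r) contradicts dist_lipschitz *)
pose s := (D (a + r *: e) + 3 * r) / 4.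
have Ds : D (a + s *: e) = s.
  by apply: dist_ray_lt_reach; rewrite ?reach_r ?lte_fin /s //; lra.
have := dist_lipschitz (a + s *: e) (a + r *: e).
by rewrite Ds phi_ray_sub // ler0_norm /s; lra.
Qed.

Lemma ray_nearest_unique a e b s t : strictly_convex_norm phi -> K b -> phi e = 1 ->
  0 < s < t -> D (a + t *: e) = t -> phi (a + s *: e - b) = s -> b = a.
Proof.
move=> phi_sc Kb e1 /andP[s0 st] Dt phib.
set x := a + s *: e in phib; set y := a + t *: e in Dt.
have yx : y - x = (t - s) *: e by rewrite /x /y opprD addrACA subrr add0r scalerBl.
have phiyx : phi (y - x) = t - s by rewrite yx phiZ_unit // subr_ge0 ltW.
have tight : phi ((y - x) + (x - b)) = phi (y - x) + phi (x - b).
  apply/le_anti; rewrite phiD //= phiyx phib addrA subrK (phiB phi_norm) -Dt.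
  by rewrite subrK dist_le.
have := phi_sc _ _ tight; rewrite phib phiyx yx scalerA mulrC -scalerA => /scalerI.
rewrite subr_eq0 gt_eqF // => /(_ isT) xb.
by apply: (addrI (s *: e)); rewrite {1}xb subrK /x addrC.
Qed.

End Distance.

Section NormalBundle.
Variables (R : realType) (n : nat) (phi : 'rV[R]_n -> R) (K : set 'rV[R]_n).
Hypotheses (phi_norm : is_norm phi) (phi_sc : strictly_convex_norm phi) (K0 : K !=set0).
Local Notation D := (dist phi K).
Local Notation N := (normal_bundle phi K).
Local Notation reach := (reach phi K).
Local Notation Cut := (cut_locus phi K).
Local Notation xi := (xi phi K).
Local Notation nu := (nu phi K).

Lemma reach_gt0 p : N p -> (0 < reach p)%E.
Proof.
case: p => a e [_ [_ [s [s0 Ds]]]].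
by apply: lt_le_trans (reach_ge s0 Ds); rewrite lte_fin.
Qed.

Lemma reach_usc : usc_on N reach.
Proof.
move=> [a e] Np t reach_t; have [/= Ka [e1 _]] := Np.
have [r reach_r] : exists r, reach (a, e) = r%:E.
  by move: (reach_gt0 Np) reach_t; case: (reach (a, e)) => // r; exists r.
have rt : r < t by rewrite -lte_fin -reach_r.
have r0 : 0 < r by rewrite -lte_fin -reach_r reach_gt0.
pose s := (r + t) / 2.
have s0 : 0 < s by rewrite /s; lra.
have Ds : D (a + s *: e) < s.
  rewrite lt_neqAle dist_ray_le ?(ltW s0) // andbT; apply/eqP => /(reach_ge s0).
  by rewrite reach_r lee_fin /s; lra.
have D_cont : {for (a, e), continuous (fun q : 'rV[R]_n * 'rV[R]_n => D (q.1 + s *: q.2))}.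
  apply: continuous_comp; last exact: dist_continuous.
  by apply: cvgD; [exact: cvg_fst | apply: cvgZ; [exact: cvg_cst | exact: cvg_snd]].
near=> q => Nq; have [Kq [q1 _]] := Nq.
rewrite [q]surjective_pairing; apply: le_lt_trans (reach_le_dist_lt phi_norm K0 Kq q1 (ltW s0) _) _.
  by near: q; exact: cvgr_lt D_cont _ Ds.
by rewrite lte_fin /s; lra.
Unshelve. all: by end_near.
Qed.

Lemma xi_dist_gt0 x a : ~ K x -> xi x a -> 0 < D x.
Proof.
move=> Kx [Ka phia]; rewrite lt_neqAle dist_ge0 // andbT; apply/eqP => D0.
by apply: Kx; move: phia; rewrite -D0 => /(phi_eq0 phi_norm)/eqP; rewrite subr_eq0 => /eqP->.
Qed.

Lemma nu_ray x a : ~ K x -> xi x a -> a + D x *: nu x a = x.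
Proof.
move=> Kx xia; have D0 := xi_dist_gt0 Kx xia.
by rewrite /nu scalerA mulfV ?gt_eqF // scale1r addrC subrK.
Qed.

Lemma nu_unit x a : ~ K x -> xi x a -> phi (nu x a) = 1.
Proof.
move=> Kx xia; have D0 := xi_dist_gt0 Kx xia; case: xia => _ phia.
by rewrite /nu phiZ // phia ger0_norm ?invr_ge0 ?(ltW D0) // mulVf ?gt_eqF.
Qed.

Lemma reach_nu_ge x a : ~ K x -> xi x a -> ((D x)%:E <= reach (a, nu x a))%E.
Proof. by move=> Kx xia; apply: reach_ge (xi_dist_gt0 Kx xia) _; rewrite nu_ray. Qed.

Lemma normal_bundle_nu x a : ~ K x -> xi x a -> N (a, nu x a).
Proof.
move=> Kx xia; split; first by case: xia.
split; first exact: nu_unit.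
by exists (D x); rewrite nu_ray // (xi_dist_gt0 Kx xia).
Qed.

Lemma cut_locus_two_nearest x a b : ~ K x -> xi x a -> xi x b -> a != b -> Cut x.
Proof.
move=> Kx xia [Kb phib] ab; have D0 := xi_dist_gt0 Kx xia.
have reach_D : reach (a, nu x a) = (D x)%:E.
  apply/le_anti; rewrite reach_nu_ge // andbT; apply: reach_le => s s0 Ds.
  rewrite leNgt; apply/negP => Dxs; move/negP: ab; apply; apply/eqP/esym.
  apply: (ray_nearest_unique (s := D x) phi_norm phi_sc Kb (nu_unit Kx xia) _ Ds).
    by rewrite D0 Dxs.
  by rewrite nu_ray.
exists (a, nu x a); last by rewrite reach_D /= nu_ray.
by split; [exact: normal_bundle_nu | rewrite reach_D ltry].
Qed.

Lemma xi_singleton x : closed K -> ~ K x -> ~ Cut x -> exists a, xi x = [set a].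
Proof.
move=> K_closed Kx Cx; have [a Ka phia] := dist_attained phi_norm K0 x K_closed.
exists a; apply/seteqP; split=> [b xib|_ ->] //=; apply/eqP/negP => /negP ba.
by apply: Cx; apply: (cut_locus_two_nearest Kx xib (conj Ka phia)).
Qed.

Section InsideRay.
Variables (a e : 'rV[R]_n) (s t : R).
Hypotheses (Ka : K a) (e1 : phi e = 1) (st : 0 < s < t) (Dt : D (a + t *: e) = t).

Lemma dist_inside_ray : D (a + s *: e) = s.
Proof.
case/andP: st => s0 /ltW ts.
by apply: (dist_ray_segment phi_norm K0 Ka e1 Dt); rewrite (ltW s0).
Qed.

Lemma xi_inside_ray : xi (a + s *: e) = [set a].
Proof.
apply/seteqP; split=> [b [Kb phib]|_ ->] /=.
  by apply: (ray_nearest_unique phi_norm phi_sc Kb e1 st Dt); rewrite phib dist_inside_ray.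
by split=> //; rewrite dist_inside_ray addrC addKr phiZ_unit ?(ltW (andP st).1).
Qed.

Lemma not_cut_inside_ray : ~ Cut (a + s *: e).
Proof.
case/andP: st => s0 ts; move=> [[a' e'] [Np' reach_fin] /= x_eq].
have [/= Ka' [e'1 _]] := Np'.
have [r' reach_r'] : exists r', reach (a', e') = r'%:E.
  by move: (reach_gt0 Np') reach_fin; case: (reach (a', e')) => // r'; exists r'.
rewrite reach_r' /= in x_eq.
have r'0 : 0 < r' by rewrite -lte_fin -reach_r' reach_gt0.
have Dr' : D (a + s *: e) = r'.
  by rewrite -x_eq (dist_ray_reach phi_norm K0 Ka' e'1 r'0 reach_r').
have r's : r' = s by rewrite -Dr' dist_inside_ray.
have a'a : a' = a.
  have : xi (a + s *: e) a'.
    by split=> //; rewrite Dr' -x_eq addrC addKr phiZ_unit // ltW.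
  by rewrite xi_inside_ray.
subst a'; rewrite r's in x_eq reach_r'; have e'e : e' = e.
  apply: (@scalerI _ _ s); first by rewrite gt_eqF.
  exact: (addrI a x_eq).
subst e'; have := reach_ge (lt_trans s0 ts) Dt.
by rewrite reach_r' lee_fin leNgt ts.
Qed.

End InsideRay.

Lemma normal_bundle_nearest p : N p ->
  exists2 x, ~ K x /\ ~ Cut x & xi x = [set p.1] /\ p.2 = nu x p.1.
Proof.
case: p => a e [/= Ka [e1 [t [t0 Dt]]]].
have st : 0 < t / 2 < t by apply/andP; split; lra.
have Dx := dist_inside_ray Ka e1 st Dt.
exists (a + t / 2 *: e); last first.
  split; first exact: xi_inside_ray Ka e1 st Dt.
  by rewrite /nu Dx addrC addKr scalerA mulVf ?scale1r // gt_eqF //; lra.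
split; last exact: not_cut_inside_ray Ka e1 st Dt.
by move/(dist_eq0 phi_norm K0); rewrite Dx => t0_eq; lra.
Qed.

Lemma reach_nu x a : ~ K x -> xi x a ->
  reach (a, nu x a) = ((D x)%:E * rho phi K x a)%E.
Proof.
move=> Kx xia; have D0 := xi_dist_gt0 Kx xia.
have ray_nu u : a + (D x * u) *: nu x a = a + u *: (x - a).
  by rewrite /nu scalerA mulrAC mulfV ?gt_eqF // mul1r.
rewrite /rho -ereal_sup_pZl //; apply/le_anti/andP; split.
  apply: ge_ereal_sup => _ [s [s0 Ds] <-]; apply: ereal_sup_ubound.
  exists (s / D x)%:E; last by rewrite /= -EFinM mulrCA mulfV ?gt_eqF // mulr1.
  by exists (s / D x) => //=; rewrite -ray_nu mulrCA mulfV ?gt_eqF // mulr1 Ds divfK ?gt_eqF.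
apply: ge_ereal_sup => _ [_ [u Du <-] <-]; rewrite -EFinM.
have [u0|u_gt0] := leP u 0.
  apply: le_trans (reach_nu_ge Kx xia); rewrite lee_fin ger_pMr //.
  by apply: le_trans u0 _; exact: ler01.
by apply: reach_ge; [exact: mulr_gt0 | rewrite ray_nu Du mulrC].
Qed.

End NormalBundle.

Unset Implicit Arguments.

Theorem lemma2p35 (R : realType) (n : nat) (phi : 'rV[R]_n -> R)
  (K : set 'rV[R]_n) :
  is_norm phi -> strictly_convex_norm phi ->
  C2_on phi [set x | x != 0] ->
  closed K -> K !=set0 ->
  let N := normal_bundle phi K in
  let Cut := cut_locus phi K in
  let good := [set x | ~ K x /\ ~ Cut x] in
  [/\ (forall p, N p -> (0 < reach phi K p)%E),
      usc_on N (reach phi K),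
      (forall x, good x -> exists a, xi phi K x = [set a]),
      N = [set p | exists2 x, good x &
                    xi phi K x = [set p.1] /\ p.2 = nu phi K x p.1]
    & forall x a, good x -> xi phi K x = [set a] ->
        reach phi K (a, nu phi K x a) = ((dist phi K x)%:E * rho phi K x a)%E].
Proof.
move=> phi_norm phi_sc _ K_closed K0 N Cut good; split.
- exact: reach_gt0.
- exact: reach_usc.
- by move=> x [Kx Cx]; apply: xi_singleton.
- apply/seteqP; split=> [p|[a e] [x [Kx _] /= [xi_a ->]]].
    exact: normal_bundle_nearest.
  by apply: normal_bundle_nu; rewrite ?xi_a.
- by move=> x a [Kx _] xi_a; apply: reach_nu; rewrite ?xi_a.
Qed.
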